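(* Let $\ell\ge 1$ and $w\ge 0$ be integers, and let $A=\langle A_1,\dots,A_\ell\rangle$ and $B=\langle B_1,\dots,B_\ell\rangle$ be real sequences. Let $i,j\in\{1,\dots,\ell\}$ with $i-w\le j\le i+w$, so that $(i,j)$ is an alignment permitted by the window $w$. If $B_j>\mathbb{U}^{\Omega}_j$, then either $A_i<\mathbb{L}^B_i\le B_j\le \mathbb{U}^B_i$ or $\mathbb{L}^B_i\le A_i\le B_j\le \mathbb{U}^B_i$.
   Context: For a real sequence $S=\langle S_1,\dots,S_\ell\rangle$ and window $w$, the upper and lower envelopes are the sequences $\mathbb{U}^S_i=\max_{\max(1,i-w)\le j\le \min(\ell,i+w)} S_j$ and $\mathbb{L}^S_i=\min_{\max(1,i-w)\le j\le \min(\ell,i+w)} S_j$ for $1\le i\le\ell$. The projection $\Omega=\Omega_w(A,B)$ of $A$ onto $B$ is the sequence with $\Omega_i=\mathbb{U}^B_i$ if $A_i>\mathbb{U}^B_i$, $\Omega_i=\mathbb{L}^B_i$ if $A_i<\mathbb{L}^B_i$, and $\Omega_i=A_i$ otherwise. $\mathbb{U}^{\Omega}$ and $\mathbb{L}^{\Omega}$ denote the upper and lower envelopes (with the same window $w$) of $\Omega$. *)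

From Stdlib Require Import Reals List Lia Lra.
Open Scope R_scope.

(* A real sequence S = <S_1, ..., S_l> is represented by a function
   S : nat -> R, of which only the values S 1, ..., S l are meaningful. *)

Definition window (l w i : nat) : list nat :=
  let lo := Nat.max 1 (i - w) in
  let hi := Nat.min l (i + w) in
  seq lo (S hi - lo).

Definition list_max (S : nat -> R) (js : list nat) : R :=
  match js with
  | nil => 0
  | j0 :: js' => fold_left (fun acc j => Rmax acc (S j)) js' (S j0)
  end.

Definition list_min (S : nat -> R) (js : list nat) : R :=
  match js with
  | nil => 0
  | j0 :: js' => fold_left (fun acc j => Rmin acc (S j)) js' (S j0)
  end.

Definition upper_env (l w : nat) (S : nat -> R) (i : nat) : R :=
  list_max S (window l w i).

Definition lower_env (l w : nat) (S : nat -> R) (i : nat) : R :=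
  list_min S (window l w i).

Definition projection (l w : nat) (A B : nat -> R) (i : nat) : R :=
  if Rlt_dec (upper_env l w B i) (A i) then upper_env l w B i
  else if Rlt_dec (A i) (lower_env l w B i) then lower_env l w B i
  else A i.

(* Since j lies in the window of i and i in the window of j, we have
   L^B_i <= B_j <= U^B_i and Omega_i <= U^Omega_j < B_j.  Clamping only raises
   values below U^B_i, so min(A_i, U^B_i) <= Omega_i < B_j <= U^B_i forces
   A_i < B_j; the two alternatives are then A_i < L^B_i and A_i >= L^B_i. *)
From Pilot Require Import Defs.
From Stdlib Require Import Reals List Lia Lra.
Open Scope R_scope.

Lemma fold_left_Rmax_ge_acc (S : nat -> R) (js : list nat) (a : R) :
  a <= fold_left (fun acc j => Rmax acc (S j)) js a.
Proof.
  revert a; induction js as [|x js IH]; intros a; simpl.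
  - lra.
  - eapply Rle_trans; [apply Rmax_l | apply IH].
Qed.

Lemma fold_left_Rmax_ge (S : nat -> R) (js : list nat) (a : R) (k : nat) :
  In k js -> S k <= fold_left (fun acc j => Rmax acc (S j)) js a.
Proof.
  revert a; induction js as [|x js IH]; intros a; simpl; [tauto|].
  intros [<- | Hk].
  - eapply Rle_trans; [apply Rmax_r | apply fold_left_Rmax_ge_acc].
  - now apply IH.
Qed.

Lemma fold_left_Rmin_le_acc (S : nat -> R) (js : list nat) (a : R) :
  fold_left (fun acc j => Rmin acc (S j)) js a <= a.
Proof.
  revert a; induction js as [|x js IH]; intros a; simpl.
  - lra.
  - eapply Rle_trans; [apply IH | apply Rmin_l].
Qed.

Lemma fold_left_Rmin_le (S : nat -> R) (js : list nat) (a : R) (k : nat) :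
  In k js -> fold_left (fun acc j => Rmin acc (S j)) js a <= S k.
Proof.
  revert a; induction js as [|x js IH]; intros a; simpl; [tauto|].
  intros [<- | Hk].
  - eapply Rle_trans; [apply fold_left_Rmin_le_acc | apply Rmin_r].
  - now apply IH.
Qed.

Lemma le_list_max (S : nat -> R) (js : list nat) (k : nat) :
  In k js -> S k <= Defs.list_max S js.
Proof.
  destruct js as [|x js]; simpl; [tauto|].
  intros [<- | Hk].
  - apply fold_left_Rmax_ge_acc.
  - now apply fold_left_Rmax_ge.
Qed.

Lemma list_min_le (S : nat -> R) (js : list nat) (k : nat) :
  In k js -> Defs.list_min S js <= S k.
Proof.
  destruct js as [|x js]; simpl; [tauto|].
  intros [<- | Hk].
  - apply fold_left_Rmin_le_acc.
  - now apply fold_left_Rmin_le.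
Qed.

Lemma In_window (l w i j : nat) :
  In j (window l w i) <-> (1 <= j <= l /\ i <= j + w /\ j <= i + w)%nat.
Proof.
  unfold window; rewrite in_seq; lia.
Qed.

Lemma upper_env_ge (l w : nat) (S : nat -> R) (i j : nat) :
  (1 <= j <= l)%nat -> (i <= j + w)%nat -> (j <= i + w)%nat ->
  S j <= upper_env l w S i.
Proof.
  intros; apply le_list_max, In_window; lia.
Qed.

Lemma lower_env_le (l w : nat) (S : nat -> R) (i j : nat) :
  (1 <= j <= l)%nat -> (i <= j + w)%nat -> (j <= i + w)%nat ->
  lower_env l w S i <= S j.
Proof.
  intros; apply list_min_le, In_window; lia.
Qed.

Lemma Rmin_upper_env_le_projection (l w : nat) (A B : nat -> R) (i : nat) :
  Rmin (A i) (upper_env l w B i) <= projection l w A B i.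
Proof.
  unfold projection.
  destruct (Rlt_dec (upper_env l w B i) (A i)); [apply Rmin_r|].
  destruct (Rlt_dec (A i) (lower_env l w B i)).
  - eapply Rle_trans; [apply Rmin_l | lra].
  - apply Rmin_l.
Qed.

Theorem mainTheorem1 (l w : nat) (A B : nat -> R) (i j : nat) :
  (1 <= l)%nat ->
  (1 <= i <= l)%nat -> (1 <= j <= l)%nat ->
  (i <= j + w)%nat -> (j <= i + w)%nat ->
  B j > upper_env l w (projection l w A B) j ->
  (A i < lower_env l w B i /\ lower_env l w B i <= B j /\ B j <= upper_env l w B i)
  \/
  (lower_env l w B i <= A i /\ A i <= B j /\ B j <= upper_env l w B i).
Proof.
  intros _ Hi Hj Hij Hji HBj.
  assert (HU : B j <= upper_env l w B i) by (apply upper_env_ge; lia).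
  assert (HL : lower_env l w B i <= B j) by (apply lower_env_le; lia).
  assert (HO : projection l w A B i <= upper_env l w (projection l w A B) j)
    by (apply upper_env_ge; lia).
  assert (HAB : A i < B j).
  { pose proof (Rmin_upper_env_le_projection l w A B i) as Hmin.
    unfold Rmin in Hmin; destruct (Rle_dec (A i) (upper_env l w B i)); lra. }
  destruct (Rlt_dec (A i) (lower_env l w B i)); [left | right]; lra.
Qed.
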